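(* Let $I,J,I',J'\subseteq\mathbb{R}$ be intervals and let $\tilde s:I'\times J'\to I$, $\tilde t:I'\times J'\to J$ be such that $\tilde T(x,y)=(\tilde s(x,y),\tilde t(x,y))$ is a bijection from $I'\times J'$ onto $I\times J$. Let $\tilde h:I'\times J'\to(0,\infty)$ be such that for every bounded continuous $g:\mathbb{R}\to\mathbb{R}$ the functions $(g\circ\tilde s)\cdot\tilde h$, $(g\circ\tilde t)\cdot\tilde h$ and $(g\circ\tilde s)\cdot(\tilde t-\tilde s)\cdot\tilde h$ are competitorblind. Then $\tilde s$ is constant in $y$ and $\tilde t$ is constant in $x$.
   Context: Two finite measures $\alpha,\beta$ on $\mathbb{R}^2$ are competitors if they have the same first marginal $\alpha_0$ and the same second marginal, and for disintegrations $(\alpha_x),(\beta_x)$ with respect to $\alpha_0$ one has $\int y\,\alpha_x(dy)=\int y\,\beta_x(dy)$ for $\alpha_0$-a.e. $x$. A function $f$ on a rectangle $A\times B$ is called competitorblind if $\int f\,d\alpha=\int f\,d\beta$ whenever $\alpha,\beta$ are competitors concentrated on $A\times B$. *)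

From HB Require Import structures.
From mathcomp Require Import all_boot all_order all_algebra.
From mathcomp Require Import all_classical all_reals all_analysis.
Set Implicit Arguments. Unset Strict Implicit. Unset Printing Implicit Defensive.
Import Order.TTheory GRing.Theory Num.Theory.
Import numFieldNormedType.Exports.
Local Open Scope classical_set_scope.
Local Open Scope ring_scope.

(* A (probability) kernel [k] is a disintegration of the measure [a] on R^2
   with respect to its first marginal a_0 = a \o fst^-1 :
   a (X x Y) = \int_{x in X} k x Y  d a_0(x), written via the image measure
   as an integral against [a] of a function of the first coordinate. *)
Definition disintegration (R : realType)
    (a : {finite_measure set (R * R)%type -> \bar R}) (k : R.-pker R ~> R) :=
  forall X Y : set R, measurable X -> measurable Y ->
    a (X `*` Y) = (\int[a]_(p in X `*` [set: R]) k p.1 Y)%E.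

Definition competitors (R : realType)
    (a b : {finite_measure set (R * R)%type -> \bar R}) :=
  (forall X : set R, measurable X -> a (X `*` [set: R]) = b (X `*` [set: R])) /\
  (forall Y : set R, measurable Y -> a ([set: R] `*` Y) = b ([set: R] `*` Y)) /\
  exists ka kb : R.-pker R ~> R,
    [/\ disintegration a ka, disintegration b kb &
        {ae a, forall p : R * R,
           (\int[ka p.1]_y (y%:E) = \int[kb p.1]_y (y%:E))%E}].

Definition concentrated_on (R : realType)
    (a : {finite_measure set (R * R)%type -> \bar R}) (S : set (R * R)) :=
  a (~` S) = 0%E.

Definition competitorblind (R : realType) (A B : set R) (f : R * R -> R) :=
  forall a b : {finite_measure set (R * R)%type -> \bar R},
    competitors a b -> concentrated_on a (A `*` B) -> concentrated_on b (A `*` B) ->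
    (\int[a]_(p in A `*` B) (f p)%:E = \int[b]_(p in A `*` B) (f p)%:E)%E.

Definition nd_interval (R : realType) (E : set R) :=
  is_interval E /\ exists x y, E x /\ E y /\ x < y.

(* Competitorblindness of F, tested on the competitors
     a = δ(x,y1) + δ(x,y3) + 2 δ(x',y2)   and   b = 2 δ(x,y2) + δ(x',y1) + δ(x',y3),
   y2 the midpoint of y1 and y3, makes the second difference
   F(x,y1) + F(x,y3) - 2 F(x,y2) independent of x.  With g a bump at z, this says
   that the masses at z of the signed measures (weights w = 1, 1, -2 on y1, y3, y2)
     ν_x = Σ w_k h(x,y_k) δ s(x,y_k),  ρ_x = Σ w_k h(x,y_k) t(x,y_k) δ s(x,y_k),
     μ_x = Σ w_k h(x,y_k) δ t(x,y_k)
   do not depend on x.  By injectivity of (s,t), every value of a non-constant row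
   y ↦ s(x,y) on {y1,y2,y3} is an atom of ν_x or ρ_x, so one constant row forces all
   rows to be constant.  A non-constant row has an isolated value z, where
   t = ρ_x(z)/ν_x(z); hence (s,t) sends such a row into a finite set independent
   of x, and injectivity leaves room for finitely many such rows only, whereas I'
   is infinite.  Once s is constant in y, the t-values of a row are distinct, and
   the positive atoms t(x,y1), t(x,y3) of μ_x do not depend on x; two such
   comparisons give t(x,y) = t(x',y). *)

From HB Require Import structures.
From mathcomp Require Import all_boot all_order all_algebra.
From mathcomp Require Import all_classical all_reals all_analysis.
From mathcomp Require Import measurable_realfun.
From mathcomp.algebra_tactics Require Import ring lra.
Import Order.TTheory GRing.Theory Num.Theory.
Import numFieldNormedType.Exports.
Local Open Scope classical_set_scope.
Local Open Scope ring_scope.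
Set Implicit Arguments. Unset Strict Implicit. Unset Printing Implicit Defensive.

(** * Integration against finitely supported measures *)

Section finite_domain.
Context d (T : measurableType d) d' (U : measurableType d').
Hypothesis measurable_points : forall t : T, measurable [set t].

Lemma measurable_fun_finite (D : set T) (f : T -> U) :
  finite_set D -> measurable_fun D f.
Proof.
move=> finD _ B _; apply: countable_measurable => //.
apply: finite_set_countable; apply: sub_finite_set finD; exact: subIsetl.
Qed.

End finite_domain.

Section integral_conull.
Local Open Scope ereal_scope.
Context d (T : measurableType d) (R : realType).
Variables (mu : {measure set T -> \bar R}) (P : set T).
Hypotheses (mP : measurable P) (muCP : mu (~` P) = 0).
Import HBNNSimple.

Lemma ge0_integral_setI_conull (D : set T) (f : T -> \bar R) :
  (forall x, D x -> 0 <= f x) ->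
  \int[mu]_(x in D) f x = \int[mu]_(x in D `&` P) f x.
Proof.
move=> f0; have f0P x : (D `&` P) x -> 0 <= f x by move=> [/f0].
apply/le_anti/andP; split; rewrite !ge0_integralE//.
- apply: ge_ereal_sup => _ [h hf <-]; apply: ereal_sup_ubound.
  exists (proj_nnsfun h mP); last first.
    rewrite -!integralT_nnsfun; apply: ge0_ae_eq_integral => //.
    + by apply/measurable_EFinP; exact: measurable_funP.
    + by apply/measurable_EFinP; exact: measurable_funP.
    + by move=> x _; rewrite lee_fin.
    + by move=> x _; rewrite lee_fin.
    exists (~` P); split => //; first exact: measurableC.
    move=> x /= /not_implyP [_ hx] Px; apply: hx.
    by rewrite mindicE mem_set // mulr1.
  move=> x /=; rewrite mindicE; have [xP|xNP] := boolP (x \in P); last first.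
    by rewrite mulr0 /patch; case: ifPn => // /set_mem; exact: f0P.
  rewrite mulr1; apply: (le_trans (hf x)); rewrite /patch.
  case: ifPn => [xD|xND]; last by rewrite in_setI (negbTE xND).
  by rewrite in_setI xD xP.
- apply: ereal_sup_le => _ [h hf <-]; exists h => // x.
  apply: (le_trans (hf x)); rewrite /patch; case: ifPn => [xDP|_].
    by case/set_mem: xDP => xD _; rewrite mem_set.
  by case: ifPn => // xD; exact: f0 (set_mem xD).
Qed.

(* [f] need not be measurable: this is what lets finitely supported measures
   integrate the arbitrary functions built from [s], [t] and [h]. *)
Lemma integral_setI_conull (D : set T) (f : T -> \bar R) :
  \int[mu]_(x in D) f x = \int[mu]_(x in D `&` P) f x.
Proof.
rewrite integralE [RHS]integralE.
by rewrite (ge0_integral_setI_conull (fun x _ => funepos_ge0 f x))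
  (ge0_integral_setI_conull (fun x _ => funeneg_ge0 f x)).
Qed.

End integral_conull.

Section dirac_sum.
Local Open Scope ereal_scope.
Context d (T : measurableType d) (R : realType).

Definition dirac_sum (l : seq T) : set T -> \bar R :=
  msum (fun k => \d_(nth point l k)) (size l).

HB.instance Definition _ l := Measure.on (dirac_sum l).

Lemma dirac_sumE l A : dirac_sum l A = (\sum_(p <- l) \1_A p)%:E.
Proof.
by rewrite /dirac_sum /msum /= -sumEFin (big_nth point) big_mkord; apply: eq_bigr.
Qed.

Lemma dirac_sum_fin_num l : fin_num_fun (dirac_sum l).
Proof. by move=> A _; rewrite dirac_sumE. Qed.

HB.instance Definition _ l :=
  Measure_isFinite.Build _ _ _ (dirac_sum l) (@dirac_sum_fin_num l).

Lemma ge0_integral_dirac_sum l D (f : T -> \bar R) : measurable D ->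
  (forall x, D x -> 0 <= f x) -> measurable_fun D f ->
  \int[dirac_sum l]_(x in D) f x = \sum_(p <- l) (\1_D p)%:E * f p.
Proof.
move=> mD f0 mf; rewrite ge0_integral_measure_sum // (big_nth point) big_mkord.
by apply: eq_bigr => i _; rewrite integral_dirac // diracE indicE.
Qed.

Hypothesis measurable_points : forall t : T, measurable [set t].

Lemma integral_dirac_sum l D (f : T -> R) : measurable D ->
  \int[dirac_sum l]_(x in D) (f x)%:E = (\sum_(p <- l) \1_D p * f p)%R%:E.
Proof.
move=> mD; have finl := finite_seq l.
have ml : measurable [set` l] by exact/countable_measurable/finite_set_countable.
have lC0 : dirac_sum l (~` [set` l]) = 0.
  by rewrite dirac_sumE big_seq big1 // => p pl; rewrite indicE memNset.
have mDl : measurable (D `&` [set` l]) by exact: measurableI.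
have mf : measurable_fun (D `&` [set` l]) (EFin \o f).
  exact/measurable_fun_finite/finite_setIr.
rewrite (integral_setI_conull ml lC0) integralE.
rewrite !ge0_integral_dirac_sum //; try by
  [exact: measurable_funepos|exact: measurable_funeneg|
   move=> x _; exact: funepos_ge0|move=> x _; exact: funeneg_ge0].
rewrite big_seq [X in _ - X]big_seq [in RHS]big_seq.
under eq_bigr => p pl do rewrite funeposE -EFin_max -EFinM.
under [X in _ - X]eq_bigr => p pl do rewrite funenegE -EFinN -EFin_max -EFinM.
rewrite !sumEFin -EFinB -sumrB; congr EFin; apply: eq_bigr => p pl.
have -> : \1_(D `&` [set` l]) p = \1_D p :> R.
  by rewrite !indicE in_setI (mem_set (pl : [set` l] p)) andbT.
by rewrite -mulrBr -[in RHS](funrposBneg f).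
Qed.

End dirac_sum.
Arguments dirac_sum {d T R} l.

Section dirac_avg.
Context d (T : measurableType d) (R : realType) (y1 y3 : T).

Definition dirac_avg : set T -> \bar R := mscale (2^-1)%:nng (dirac_sum [:: y1; y3]).

HB.instance Definition _ := Measure.on dirac_avg.

Local Open Scope ereal_scope.

Lemma dirac_avgE A : dirac_avg A = ((\1_A y1 + \1_A y3) / 2)%:E.
Proof.
by rewrite /dirac_avg /mscale /= dirac_sumE !big_cons big_nil addr0 -EFinM mulrC.
Qed.

Lemma dirac_avg_setT : dirac_avg [set: T] = 1.
Proof. by rewrite dirac_avgE !indicE !in_setT; congr EFin; rewrite /=; lra. Qed.

HB.instance Definition _ := Measure_isProbability.Build _ _ _ dirac_avg dirac_avg_setT.

Lemma integral_dirac_avg (f : T -> R) : measurable_fun [set: T] f ->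
  \int[dirac_avg]_x (f x)%:E = ((f y1 + f y3) / 2)%:E.
Proof.
move=> mf; have mfE : measurable_fun [set: T] (EFin \o f) by exact/measurable_EFinP.
rewrite integralE !ge0_integral_mscale // ?ge0_integral_dirac_sum //; try by
  [exact: measurable_funepos|exact: measurable_funeneg|
   move=> x _; exact: funepos_ge0|move=> x _; exact: funeneg_ge0].
have posBneg x : (Num.max (f x) 0 - Num.max (- f x) 0 = f x)%R.
  exact: (congr1 (fun g => g x) (funrposBneg f)).
rewrite !big_cons !big_nil !indicE !in_setT !mul1e !adde0 !funeposE !funenegE.
rewrite -!EFinN -!EFin_max -!EFinD; congr EFin.
by rewrite -mulrBr opprD addrACA !posBneg mulrC.
Qed.

End dirac_avg.
Arguments dirac_avg {d T R} y1 y3.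

Section switch_kernel.
Context d (Y : measurableType d) (R : realType).
Variables (x0 : R) (P Q : pprobability Y R).

Lemma measurable_fun_switch :
  measurable_fun [set: R] (fun x : R => if x == x0 then P else Q).
Proof.
by apply: measurable_fun_ifT => //; exact: measurable_fun_eqr.
Qed.

Definition switch_kernel := kprobability measurable_fun_switch.

End switch_kernel.

(** * Second differences along competitors *)

Lemma indic_setX (T U : Type) (R : realType) (A : set T) (B : set U) u v :
  \1_(A `*` B) (u, v) = \1_A u * \1_B v :> R.
Proof.
by rewrite !indicE in_setX; case: (u \in A); case: (v \in B); rewrite ?mulr1 ?mulr0.
Qed.

Lemma measurable_set1_pair (R : realType) (p : R * R) : measurable [set p].
Proof.
case: p => a b; rewrite (_ : [set (a, b)] = [set a] `*` [set b]).
  by apply: measurableX; exact: measurable_set1.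
by apply/seteqP; split => [[u v] /= [-> ->]|[u v] /= [-> ->]].
Qed.

Section second_difference.
Context (R : realType) (x x' y1 y3 : R).
Hypothesis xx' : x != x'.
Let y2 := (y1 + y3) / 2.

(* The kernel values below appear through the [probability] structure. *)
Let avgE U : (dirac_avg y1 y3 : probability R R) U = ((\1_U y1 + \1_U y3) / 2)%:E.
Proof. exact: dirac_avgE. Qed.

Let diracE' U : (\d_y2 : probability R R) U = (\1_U y2)%:E.
Proof. exact: diracE. Qed.

Let mean_dirac_avg : (\int[dirac_avg y1 y3]_y y%:E = y2%:E)%E.
Proof. exact: integral_dirac_avg. Qed.

Let mean_dirac : (\int[\d_y2]_y y%:E = y2%:E)%E.
Proof. by rewrite integral_dirac // diracT mul1e. Qed.

Lemma competitors_second_difference :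
  competitors (dirac_sum [:: (x, y1); (x, y3); (x', y2); (x', y2)])
              (dirac_sum [:: (x, y2); (x, y2); (x', y1); (x', y3)]).
Proof.
have x'x : x' != x by rewrite eq_sym.
split; [|split].
- move=> X _; rewrite /= !dirac_sumE !big_cons big_nil !indic_setX !indicE !in_setT.
  by congr EFin; ring.
- move=> Y _; rewrite /= !dirac_sumE !big_cons big_nil !indic_setX !indicE !in_setT.
  by congr EFin; ring.
exists (switch_kernel x (dirac_avg y1 y3) \d_y2).
exists (switch_kernel x \d_y2 (dirac_avg y1 y3)).
split; last first.
  by apply: aeW => -[u v] /=; case: (u == x); rewrite ?mean_dirac ?mean_dirac_avg.
all: move=> X Y mX mY; have mXR : measurable (X `*` [set: R]) by exact: measurableX.
all: rewrite ge0_integral_dirac_sum //; last first.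
all: try by apply: measurable_funTS;
  exact: measurableT_comp (measurable_kernel _ _ mY) measurable_fst.
all: rewrite /= dirac_sumE !big_cons big_nil /= eqxx (negbTE x'x) avgE diracE'.
all: rewrite !indic_setX !indicE !in_setT -!EFinM -!EFinD; congr EFin.
all: by rewrite big_nil /= !mulr1; lra.
Qed.

End second_difference.

Lemma competitorblind_second_difference (R : realType) (I' J' : set R)
    (F : R * R -> R) (x x' y1 y3 : R) :
  measurable I' -> measurable J' -> competitorblind I' J' F ->
  I' x -> I' x' -> J' y1 -> J' y3 -> J' ((y1 + y3) / 2) ->
  F (x, y1) + F (x, y3) - 2 * F (x, (y1 + y3) / 2) =
  F (x', y1) + F (x', y3) - 2 * F (x', (y1 + y3) / 2).
Proof.
move=> mI mJ cbF Ix Ix' J1 J3 J2; have [<-//|xx'] := eqVneq x x'.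
have mIJ : measurable (I' `*` J') by exact: measurableX.
have in1 u v : I' u -> J' v -> \1_(I' `*` J') (u, v) = 1 :> R.
  by move=> Iu Jv; rewrite indicE mem_set.
have conc (u u' v1 v2 v3 v4 : R) :
    I' u -> I' u' -> J' v1 -> J' v2 -> J' v3 -> J' v4 ->
    concentrated_on (dirac_sum [:: (u, v1); (u, v2); (u', v3); (u', v4)]) (I' `*` J').
  move=> Iu Iu' Jv1 Jv2 Jv3 Jv4; rewrite /concentrated_on /= dirac_sumE.
  by rewrite !big_cons big_nil !indicE !memNset //= ?addr0 // => /not_andP[].
have := cbF _ _ (competitors_second_difference y1 y3 xx')
  (conc _ _ _ _ _ _ Ix Ix' J1 J3 J2 J2) (conc _ _ _ _ _ _ Ix Ix' J2 J2 J1 J3).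
rewrite !integral_dirac_sum //; try exact: measurable_set1_pair.
by rewrite !big_cons !big_nil !in1 // => -[]; lra.
Qed.

Lemma bump_at (R : realType) (z : R) (vs : seq R) : exists g : R -> R,
  [/\ continuous g, exists M, forall u, `|g u| <= M & {in vs, forall v, g v = (v == z)%:R}].
Proof.
pose K := 1 + \sum_(v <- vs | v != z) `|v - z|^-1.
have K1 : 1 <= K by rewrite lerDl sumr_ge0 // => v _; rewrite invr_ge0.
exists ((cst 0 : R -> R^o) \max (fun u => 1 - K * `|u - z|)); split.
- move=> u; apply: continuous_max; first exact: cst_continuous.
  apply: continuousB; first exact: cst_continuous.
  apply: continuousM; first exact: cst_continuous.
  apply: (@continuous_comp _ _ _ (fun u => u - z) (fun u : R => `|u|)).
    by apply: continuousB; [exact: cvg_id|exact: cst_continuous].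
  exact: norm_continuous.
- exists 1 => u /=; rewrite ger0_norm ?le_max ?lexx // ge_max ler01 /=.
  by rewrite lerBlDr lerDl mulr_ge0 // (le_trans ler01).
move=> v vs_v /=; have [->|vz] := eqVneq v z.
  by rewrite subrr normr0 mulr0 subr0 max_r ?ler01.
have vz0 : 0 < `|v - z| by rewrite normr_gt0 subr_eq0.
have Kv : 1 + `|v - z|^-1 <= K.
  rewrite /K lerD2l (big_rem v) //= vz lerDl.
  by rewrite sumr_ge0 // => w _; rewrite invr_ge0.
rewrite max_l // subr_le0; apply: le_trans (ler_wpM2r (ltW vz0) Kv).
by rewrite mulrDl mul1r mulVf ?gt_eqF // lerDr ltW.
Qed.

Section mass3.
Context (R : fieldType).

Definition mass3 (a1 a2 a3 w1 w2 w3 z : R) : R :=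
  w1 * (a1 == z)%:R + w2 * (a2 == z)%:R + w3 * (a3 == z)%:R.

Variables (a1 a2 a3 w1 w2 w3 t1 t2 t3 z : R).

Lemma mass3C12 : mass3 a1 a2 a3 w1 w2 w3 z = mass3 a2 a1 a3 w2 w1 w3 z.
Proof. by rewrite /mass3; ring. Qed.

Lemma mass3C13 : mass3 a1 a2 a3 w1 w2 w3 z = mass3 a3 a2 a1 w3 w2 w1 z.
Proof. by rewrite /mass3; ring. Qed.

Lemma mass3_isolated : a2 != a1 -> a3 != a1 -> mass3 a1 a2 a3 w1 w2 w3 a1 = w1.
Proof.
by move=> /negbTE a21 /negbTE a31; rewrite /mass3 eqxx a21 a31 !mulr0 !addr0 mulr1.
Qed.

Lemma mass3_support :
  mass3 a1 a2 a3 w1 w2 w3 z != 0 -> [\/ z = a1, z = a2 | z = a3].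
Proof.
rewrite /mass3; have [<-|_] := eqVneq a1 z; first by constructor 1.
have [<-|_] := eqVneq a2 z; first by constructor 2.
have [<-|_] := eqVneq a3 z; first by constructor 3.
by rewrite !mulr0 !addr0 eqxx.
Qed.

Lemma mass3_moment_shift :
  mass3 a1 a2 a3 (t1 * w1) (t2 * w2) (t3 * w3) z =
  mass3 a1 a2 a3 ((t1 - a1) * w1) ((t2 - a2) * w2) ((t3 - a3) * w3) z +
  z * mass3 a1 a2 a3 w1 w2 w3 z.
Proof.
rewrite /mass3.
by case: eqP => [->|_]; case: eqP => [->|_]; case: eqP => [->|_]; rewrite /=; ring.
Qed.

Let pair_charged (w w' t t' : R) :
  w != 0 -> t != t' -> w + w' != 0 \/ t * w + t' * w' != 0.
Proof.
move=> w0 tt'; have [ww'|] := eqVneq (w + w') 0; [right|by left].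
have -> : w' = - w by apply/eqP; rewrite -addr_eq0 addrC ww'.
by rewrite mulrN -mulrBl mulf_neq0 // subr_eq0.
Qed.

(* Vanishing mass and moment at [z] would force a zero weight, or two points
   of the fibre of [z] sharing their [t]-value. *)
Lemma mass3_charged : w1 != 0 -> w2 != 0 -> w3 != 0 ->
  (a1 = a2 -> t1 != t2) -> (a1 = a3 -> t1 != t3) -> (a2 = a3 -> t2 != t3) ->
  ~ (a1 = a2 /\ a2 = a3) -> [\/ z = a1, z = a2 | z = a3] ->
  mass3 a1 a2 a3 w1 w2 w3 z != 0 \/
  mass3 a1 a2 a3 (t1 * w1) (t2 * w2) (t3 * w3) z != 0.
Proof.
move=> w10 w20 w30 i12 i13 i23 nflat za.
rewrite /mass3; case: (eqVneq a1 z) => [e1|n1]; case: (eqVneq a2 z) => [e2|n2];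
  case: (eqVneq a3 z) => [e3|n3]; rewrite ?mulr1 ?mulr0 ?addr0 ?add0r.
- by exfalso; apply: nflat; split; congruence.
- by apply: pair_charged => //; apply: i12; congruence.
- by apply: pair_charged => //; apply: i13; congruence.
- by left.
- by apply: pair_charged => //; apply: i23; congruence.
- by left.
- by left.
- by case: za => e; [move: n1|move: n2|move: n3]; rewrite e eqxx.
Qed.

End mass3.

(* Equals [F (x, y1) + F (x, y3) - 2 * F (x, y2)] for [F = (\1_[set z] \o S) * W]. *)
Definition second_diff_mass (R : realType) (S W : R -> R -> R) (y1 y3 x z : R) : R :=
  mass3 (S x y1) (S x y3) (S x ((y1 + y3) / 2))
        (W x y1) (W x y3) (-2 * W x ((y1 + y3) / 2)) z.

Lemma second_diff_mass_indep (R : realType) (I' J' : set R) (S W : R -> R -> R)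
    (y1 y3 : R) :
  measurable I' -> measurable J' -> J' y1 -> J' y3 -> J' ((y1 + y3) / 2) ->
  (forall g : R -> R, continuous g -> (exists M, forall z, `|g z| <= M) ->
     competitorblind I' J' (fun p => g (S p.1 p.2) * W p.1 p.2)) ->
  forall x x' z, I' x -> I' x' ->
  second_diff_mass S W y1 y3 x z = second_diff_mass S W y1 y3 x' z.
Proof.
move=> mI mJ J1 J3 J2 cbSW x x' z Ix Ix'; set y2 := (y1 + y3) / 2.
have [g [gc gb gv]] := bump_at z [:: S x y1; S x y3; S x y2; S x' y1; S x' y3; S x' y2].
have := competitorblind_second_difference mI mJ (cbSW g gc gb) Ix Ix' J1 J3 J2.
by rewrite /= !gv ?inE ?eqxx ?orbT // /second_diff_mass /mass3 -/y2; lra.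
Qed.

Lemma second_diff_mass_shift (R : realType) (S T W : R -> R -> R) (y1 y3 x z : R) :
  second_diff_mass S (fun x y => T x y * W x y) y1 y3 x z =
  second_diff_mass S (fun x y => (T x y - S x y) * W x y) y1 y3 x z +
  z * second_diff_mass S W y1 y3 x z.
Proof.
rewrite /second_diff_mass [-2 * (T _ _ * _)]mulrCA [-2 * ((T _ _ - _) * _)]mulrCA.
exact: mass3_moment_shift.
Qed.

(** * Rows and columns *)

Lemma finite_setI_preimage (T U : Type) (A : set T) (B : set U) (f : T -> U) :
  {in A &, injective f} -> finite_set B -> finite_set (A `&` f @^-1` B).
Proof.
move=> injf finB.
have injAB : {in A `&` f @^-1` B &, injective f}.
  by move=> x y /set_mem[Ax _] /set_mem[Ay _]; apply: injf; exact: mem_set.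
rewrite -(eq_finite_set (inj_card_eq injAB)).
by apply: sub_finite_set finB => _ [x [_ Bfx] <-].
Qed.

Lemma nd_interval_infinite (R : realType) (E : set R) : nd_interval E -> infinite_set E.
Proof.
move=> [iE [a [b [Ea [Eb ab]]]]]; apply/infiniteP/pcard_leP/injfunPex.
exists (fun n : nat => a + (b - a) / n.+1%:R).
  move=> n _; apply: (iE a b) => //; apply/andP; split.
    by rewrite lerDl divr_ge0 // subr_ge0 ltW.
  by rewrite -lerBrDl ler_pdivrMr // ler_peMr ?ler1n // subr_ge0 ltW.
have ba0 : b - a != 0 by rewrite subr_eq0 gt_eqF.
by move=> m n _ _ /addrI /(mulfI ba0) /invr_inj /eqP; rewrite eqr_nat eqSS => /eqP.
Qed.

Lemma is_interval_midpoint (R : realType) (E : set R) (a b : R) :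
  is_interval E -> E a -> E b -> E ((a + b) / 2).
Proof.
move=> iE Ea Eb; have [ab|ba] := leP a b.
  by apply: (iE a b) => //; apply/andP; split; lra.
by apply: (iE b a) => //; apply/andP; split; lra.
Qed.

Lemma midpoint_neq (R : realType) (y1 y3 : R) :
  y1 != y3 -> y1 != (y1 + y3) / 2 /\ y3 != (y1 + y3) / 2.
Proof. by move=> /eqP y13; split; apply/eqP => e; apply: y13; lra. Qed.

Section rows.
Context (R : realType) (I' J' : set R) (s t h : R -> R -> R).
Hypothesis h_gt0 : forall x y, I' x -> J' y -> 0 < h x y.
Hypothesis st_inj : set_inj (I' `*` J') (fun p => (s p.1 p.2, t p.1 p.2)).

Let h_neq0 x y : I' x -> J' y -> h x y != 0.
Proof. by move=> Ix Jy; rewrite gt_eqF // h_gt0. Qed.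

Lemma row_t_neq x y y' : I' x -> J' y -> J' y' -> y != y' ->
  s x y = s x y' -> t x y != t x y'.
Proof.
move=> Ix Jy Jy' yy' es; apply/eqP => et; move/eqP: yy'; apply.
have := @st_inj (x, y) (x, y') (mem_set (conj Ix Jy)) (mem_set (conj Ix Jy')).
by rewrite /= es et => /(_ erefl) [].
Qed.

Variables (y1 y3 : R).
Hypotheses (J1 : J' y1) (J3 : J' y3) (J2 : J' ((y1 + y3) / 2)) (y13 : y1 != y3).
Let y2 := (y1 + y3) / 2.
Let nu := second_diff_mass s h y1 y3.
Let rho := second_diff_mass s (fun x y => t x y * h x y) y1 y3.
Let flat x := s x y1 = s x y3 /\ s x y3 = s x y2.

Lemma nonflat_charged x y : I' x -> ~ flat x -> [\/ y = y1, y = y3 | y = y2] ->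
  nu x (s x y) != 0 \/ rho x (s x y) != 0.
Proof.
move=> Ix nfl yy; have [y12 y32] := midpoint_neq y13.
rewrite /rho /second_diff_mass -/y2 [-2 * (t _ _ * _)]mulrCA.
apply: mass3_charged; rewrite ?mulf_neq0 ?h_neq0 //.
- exact: row_t_neq.
- exact: row_t_neq.
- exact: row_t_neq.
by case: yy => ->; [constructor 1|constructor 2|constructor 3].
Qed.

Lemma nonflat_isolated x : I' x -> ~ flat x ->
  exists y, [/\ J' y, nu x (s x y) != 0 & t x y = rho x (s x y) / nu x (s x y)].
Proof.
move=> Ix nfl; have [y12 y32] := midpoint_neq y13.
have isolated y w : J' y -> w != 0 -> nu x (s x y) = w -> rho x (s x y) = t x y * w ->
    exists y, [/\ J' y, nu x (s x y) != 0 & t x y = rho x (s x y) / nu x (s x y)].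
  by move=> Jy w0 nuw rhow; exists y; rewrite nuw rhow mulfK.
have [e31|n31] := eqVneq (s x y3) (s x y1).
  have n23 : s x y2 != s x y3 by apply/eqP => e; apply: nfl; rewrite /flat e e31.
  have [n12 n32] : s x y3 != s x y2 /\ s x y1 != s x y2 by rewrite -e31 eq_sym.
  apply: (isolated y2 (-2 * h x y2)); rewrite ?mulf_neq0 ?h_neq0 //;
    rewrite /nu /rho /second_diff_mass -/y2 mass3C13 mass3_isolated //.
  by rewrite mulrCA.
have [e21|n21] := eqVneq (s x y2) (s x y1).
  apply: (isolated y3 (h x y3)); rewrite ?h_neq0 //;
    by rewrite /nu /rho /second_diff_mass -/y2 mass3C12 mass3_isolated // ?e21 eq_sym.
apply: (isolated y1 (h x y1)); rewrite ?h_neq0 //;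
  by rewrite /nu /rho /second_diff_mass -/y2 mass3_isolated.
Qed.

Hypothesis nu_indep : forall x x' z, I' x -> I' x' -> nu x z = nu x' z.
Hypothesis rho_indep : forall x x' z, I' x -> I' x' -> rho x z = rho x' z.

(* A flat row carries the whole second difference on the single value [s x0 y1],
   whereas every value of a non-flat row is charged. *)
Lemma flat_propagates x0 x : I' x0 -> I' x -> flat x0 -> flat x.
Proof.
move=> I0 Ix [f13 f32]; apply: contrapT => nfl.
have onto y : [\/ y = y1, y = y3 | y = y2] -> s x y = s x0 y1.
  move=> yy; have [c|c] := nonflat_charged Ix nfl yy.
    rewrite (nu_indep _ Ix I0) in c.
    by case: (mass3_support c) => ->; rewrite -?f32 -?f13.
  rewrite (rho_indep _ Ix I0) in c.
  by case: (mass3_support c) => ->; rewrite -?f32 -?f13.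
apply: nfl; split; rewrite !onto //; by [constructor 1|constructor 2|constructor 3].
Qed.

(* Each non-flat row [x] meets, at an isolated value [z], the point
   [(z, rho z / nu z)] of a finite set fixed by one reference row [a];
   injectivity of [(s, t)] then bounds the number of such rows. *)
Lemma exists_flat_row : infinite_set I' -> exists2 x0, I' x0 & flat x0.
Proof.
move=> infI; apply: contrapT => noflat.
have [a Ia] := infinite_setN0 infI.
pose pts := [set (z, rho a z / nu a z) | z in [set s a y1; s a y3; s a y2]].
have finG : finite_set ((I' `*` J') `&` (fun p => (s p.1 p.2, t p.1 p.2)) @^-1` pts).
  exact/(finite_setI_preimage st_inj)/finite_image/finite_set3.
apply/infI/(sub_finite_set _ (finite_image fst finG)) => x Ix.
have [y [Jy nu0 ty]] := nonflat_isolated Ix (fun flx => noflat (ex_intro2 _ _ x Ix flx)).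
exists (x, y) => //; split; first by split.
exists (s x y); last by rewrite /= ty (nu_indep _ Ix Ia) (rho_indep _ Ix Ia).
rewrite (nu_indep _ Ix Ia) in nu0.
by case: (mass3_support nu0) => ->; rewrite /=; tauto.
Qed.

Lemma s_row_ends_eq : infinite_set I' -> forall x, I' x -> s x y1 = s x y3.
Proof.
move=> infI x Ix; have [x0 I0 fl0] := exists_flat_row infI.
by case: (flat_propagates I0 Ix fl0).
Qed.

End rows.

Section columns.
Context (R : realType) (I' J' : set R) (s t h : R -> R -> R).
Hypothesis h_gt0 : forall x y, I' x -> J' y -> 0 < h x y.
Hypothesis st_inj : set_inj (I' `*` J') (fun p => (s p.1 p.2, t p.1 p.2)).
Hypothesis s_const : forall x y y', I' x -> J' y -> J' y' -> s x y = s x y'.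
Hypothesis mu_indep : forall y1 y3, J' y1 -> J' y3 -> forall x x' z, I' x -> I' x' ->
  second_diff_mass t h y1 y3 x z = second_diff_mass t h y1 y3 x' z.

Let t_neq x y y' : I' x -> J' y -> J' y' -> y != y' -> t x y != t x y'.
Proof. by move=> Ix Jy Jy' yy'; apply: (row_t_neq st_inj) => //; exact: s_const. Qed.

(* The second difference of row [x] has positive atoms at [t x y1], [t x y3]
   and a negative one at [t x y2]. *)
Lemma t_row_endpoint y1 y3 x x' : J' y1 -> J' y3 -> J' ((y1 + y3) / 2) ->
  y1 != y3 -> I' x -> I' x' -> t x y1 = t x' y1 \/ t x y1 = t x' y3.
Proof.
move=> J1 J3 J2 y13 Ix Ix'; have [y12 y32] := midpoint_neq y13.
have mu1 : second_diff_mass t h y1 y3 x (t x y1) = h x y1.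
  by rewrite /second_diff_mass mass3_isolated // eq_sym t_neq.
set y2 := (y1 + y3) / 2 in J2 y12 y32 *.
have mu2 : second_diff_mass t h y1 y3 x' (t x' y2) = -2 * h x' y2.
  by rewrite /second_diff_mass mass3C13 mass3_isolated // t_neq // eq_sym.
have := h_gt0 Ix J1; have := h_gt0 Ix' J2.
rewrite -mu1 (mu_indep J1 J3 _ Ix Ix') => h2_gt0 mu_gt0.
have /mass3_support[|e|e] : second_diff_mass t h y1 y3 x' (t x y1) != 0.
  by rewrite gt_eqF.
- by left.
- by right.
by move: mu_gt0; rewrite e mu2; lra.
Qed.

Lemma t_col_const : nd_interval J' ->
  forall x1 x2 y, I' x1 -> I' x2 -> J' y -> t x1 y = t x2 y.
Proof.
move=> [iJ [u [v [Ju [Jv uv]]]]] x1 x2 y I1 I2 Jy.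
have [y' Jy' yy'] : exists2 y', J' y' & y != y'.
  have [yu|] := eqVneq y u; last by exists u.
  by exists v; rewrite // yu lt_eqF.
have Jm := is_interval_midpoint iJ Jy Jy'; have [ym y'm] := midpoint_neq yy'.
have [//|e1] := t_row_endpoint Jy Jy' Jm yy' I1 I2.
have [//|e2] := t_row_endpoint Jy Jm (is_interval_midpoint iJ Jy Jm) ym I1 I2.
by move: (t_neq I2 Jy' Jm y'm); rewrite -e1 -e2 eqxx.
Qed.

End columns.

Theorem proposition4p8 (R : realType) (I J I' J' : set R)
  (s t h : R -> R -> R) :
  nd_interval I -> nd_interval J -> nd_interval I' -> nd_interval J' ->
  set_bij (I' `*` J') (I `*` J) (fun p : R * R => (s p.1 p.2, t p.1 p.2)) ->
  (forall x y, I' x -> J' y -> 0 < h x y) ->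
  (forall g : R -> R, continuous g -> (exists M, forall z, `|g z| <= M) ->
     [/\ competitorblind I' J' (fun p => g (s p.1 p.2) * h p.1 p.2),
         competitorblind I' J' (fun p => g (t p.1 p.2) * h p.1 p.2) &
         competitorblind I' J'
           (fun p => g (s p.1 p.2) * (t p.1 p.2 - s p.1 p.2) * h p.1 p.2)]) ->
  (forall x y1 y2, I' x -> J' y1 -> J' y2 -> s x y1 = s x y2) /\
  (forall x1 x2 y, I' x1 -> I' x2 -> J' y -> t x1 y = t x2 y).
Proof.
move=> _ _ ndI ndJ [_ st_inj _] h_gt0 cb.
have mI := is_interval_measurable ndI.1; have mJ := is_interval_measurable ndJ.1.
have indep S W : (forall g : R -> R, continuous g -> (exists M, forall z, `|g z| <= M) ->
    competitorblind I' J' (fun p => g (S p.1 p.2) * W p.1 p.2)) ->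
    forall y1 y3, J' y1 -> J' y3 -> forall x x' z, I' x -> I' x' ->
    second_diff_mass S W y1 y3 x z = second_diff_mass S W y1 y3 x' z.
  move=> cbSW y1 y3 J1 J3.
  exact: (second_diff_mass_indep mI mJ J1 J3 (is_interval_midpoint ndJ.1 J1 J3) cbSW).
have nu_indep := indep s h (fun g gc gb => let: And3 c _ _ := cb g gc gb in c).
have mu_indep := indep t h (fun g gc gb => let: And3 _ c _ := cb g gc gb in c).
have shift_indep : forall y1 y3, J' y1 -> J' y3 -> forall x x' z, I' x -> I' x' ->
    second_diff_mass s (fun x y => (t x y - s x y) * h x y) y1 y3 x z =
    second_diff_mass s (fun x y => (t x y - s x y) * h x y) y1 y3 x' z.
  apply: indep => g gc gb; have [_ _] := cb g gc gb.
  by under eq_fun do rewrite -mulrA.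
have s_const x y y' : I' x -> J' y -> J' y' -> s x y = s x y'.
  move=> Ix Jy Jy'; have [<-//|yy'] := eqVneq y y'.
  apply: (s_row_ends_eq h_gt0 st_inj Jy Jy' (is_interval_midpoint ndJ.1 Jy Jy') yy') => //.
  - exact: nu_indep.
  - move=> x1 x2 z I1 I2; rewrite !(second_diff_mass_shift s t h).
    by rewrite (shift_indep _ _ Jy Jy' _ _ _ I1 I2) (nu_indep _ _ Jy Jy' _ _ _ I1 I2).
  - exact: nd_interval_infinite.
split => //; exact: (t_col_const h_gt0 st_inj s_const).
Qed.
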